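(* Let $g:\mathbb{Z}_{\ge 0}\to\mathbb{R}$ be a linearly progressing opponent process (LPOP) with switching time $\tau_0\ge 1$ (so $g(0)>0$) and constant $\alpha\in[0,1)$. Let $T\ge 1$ be an integer, let $y_{\min}\in\mathbb{R}$, and let $(y^{\mathrm{nat}}_t)_{t\ge 0}$ be an arbitrary real sequence (the natural progression). For a dosing sequence $u=(u_0,\dots,u_{T-1})$ of nonnegative reals, define the well-being sequence by $y_0=y^{\mathrm{nat}}_0$ and $$y_{t+1}=\sum_{k=0}^{t} g(k)\,u_{t-k}+y^{\mathrm{nat}}_{t+1},\qquad t=0,\dots,T-1.$$ Let $u^{\mathrm{MED}}$ be the dosing sequence in which, for each $t=0,\dots,T-1$ in turn, $u^{\mathrm{MED}}_t$ is the minimum effective dose given the previous doses $u^{\mathrm{MED}}_0,\dots,u^{\mathrm{MED}}_{t-1}$, i.e. $$u^{\mathrm{MED}}_t=\max\left\{0,\ \frac{y_{\min}-y^{\mathrm{nat}}_{t+1}-\sum_{k=1}^{t} g(k)\,u^{\mathrm{MED}}_{t-k}}{g(0)}\right\}.$$ Then the well-being sequence produced by $u^{\mathrm{MED}}$ satisfies $y_t\ge y_{\min}$ for all $t=1,\dots,T$, and for every nonnegative dosing sequence $u'=(u'_0,\dots,u'_{T-1})$ whose well-being sequence satisfies $y'_t\ge y_{\min}$ for all $t=1,\dots,T$, we have $\sum_{t=0}^{T-1}u^{\mathrm{MED}}_t\le\sum_{t=0}^{T-1}u'_t$.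
   Context: An impulse response $g:\mathbb{Z}_{\ge0}\to\mathbb{R}$ is an opponent process if there is a time $\tau_0$ with $g(\tau)>0$ for $\tau<\tau_0$ and $g(\tau)\le 0$ for $\tau\ge\tau_0$. It is a linearly progressing opponent process (LPOP) if in addition there is $\alpha\in[0,1)$ with $g(t+1)\le\alpha\,g(t)$ for all $t<\tau_0-1$ and $|g(t+1)|\ge\alpha\,|g(t)|$ for all $t\ge\tau_0$. Doses are required to be nonnegative. The minimum effective dose (MED) at time $t$ is the smallest nonnegative dose $u_t$ (given the past doses) that does not cause $y_{t+1}<y_{\min}$; equivalently it yields $y_{t+1}=y_{\min}$, or it equals $0$ when dose $0$ already yields $y_{t+1}\ge y_{\min}$. *)

From Stdlib Require Import Reals Lra Lia.
Open Scope R_scope.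

Definition opponent_process (g : nat -> R) (tau0 : nat) : Prop :=
  (forall tau, (tau < tau0)%nat -> 0 < g tau) /\
  (forall tau, (tau0 <= tau)%nat -> g tau <= 0).

Definition LPOP (g : nat -> R) (tau0 : nat) (alpha : R) : Prop :=
  opponent_process g tau0 /\ 0 <= alpha < 1 /\
  (forall t, (t + 1 < tau0)%nat -> g (t + 1)%nat <= alpha * g t) /\
  (forall t, (tau0 <= t)%nat -> Rabs (g (t + 1)%nat) >= alpha * Rabs (g t)).

Fixpoint rsum (a n : nat) (f : nat -> R) : R :=
  match n with
  | O => 0
  | S n' => rsum a n' f + f (a + n')%nat
  end.

Definition wellbeing (g : nat -> R) (ynat : nat -> R) (u : nat -> R) (t : nat) : R :=
  match t with
  | O => ynat O
  | S t' => rsum 0 (S t') (fun k => g k * u (t' - k)%nat) + ynat (S t')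
  end.

(* MED doses: med_prefix n is a function agreeing with u^MED on indices < n
   (and 0 elsewhere). *)
Fixpoint med_prefix (g : nat -> R) (ynat : nat -> R) (ymin : R) (n : nat)
  : nat -> R :=
  match n with
  | O => fun _ => 0
  | S t =>
      let prev := med_prefix g ynat ymin t in
      let ut := Rmax 0 ((ymin - ynat (S t)
                          - rsum 1 t (fun k => g k * prev (t - k)%nat)) / g O) in
      fun i => if Nat.eqb i t then ut else prev i
  end.

Definition med_dose (g : nat -> R) (ynat : nat -> R) (ymin : R) (t : nat) : R :=
  med_prefix g ynat ymin (S t) t.

From Stdlib Require Import Reals Lra Lia Wf_nat.
Open Scope R_scope.

(* Let d = u' - u^MED be the excess of an admissible schedule over MED and
   E_t = sum_{s <= t} alpha^(t-s) d_s its discounted partial sums.  Summation by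
   parts rewrites the effect of d on well-being at time t+1 as
   g(0) E_t + sum_{k >= 1} (g(k) - alpha g(k-1)) E_{t-k}, and the LPOP conditions
   say exactly that g(k) - alpha g(k-1) <= 0 for k >= 1.  By strong induction every
   E_t is nonnegative: if MED gives no dose then d_t = u'_t >= 0, and if MED is
   tight then u' must do at least as well at time t+1, which forces g(0) E_t >= 0.
   Finally sum_{t < T} d_t = E_{T-1} + (1 - alpha) sum_{t < T-1} E_t >= 0. *)

Lemma rsum_first a n f : rsum a (S n) f = f a + rsum (S a) n f.
Proof.
  induction n as [|n IH]; simpl in *.
  - rewrite Nat.add_0_r. lra.
  - rewrite IH, Nat.add_succ_r. lra.
Qed.

Lemma rsum_ext a n f h : (forall i, (a <= i < a + n)%nat -> f i = h i) ->
  rsum a n f = rsum a n h.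
Proof.
  induction n as [|n IH]; intros H; simpl; [reflexivity|].
  rewrite IH by (intros; apply H; lia). rewrite (H (a + n)%nat) by lia. reflexivity.
Qed.

Lemma rsum_linear a n f h c1 c2 :
  rsum a n (fun i => c1 * f i + c2 * h i) = c1 * rsum a n f + c2 * rsum a n h.
Proof. induction n as [|n IH]; simpl; [lra|]. rewrite IH. lra. Qed.

Lemma rsum_shift a n f : rsum (S a) n f = rsum a n (fun i => f (S i)).
Proof. induction n as [|n IH]; simpl; [reflexivity|]. rewrite IH. reflexivity. Qed.

Lemma rsum_nonneg a n f : (forall i, (a <= i < a + n)%nat -> 0 <= f i) ->
  0 <= rsum a n f.
Proof.
  induction n as [|n IH]; intros H; simpl; [lra|].
  assert (0 <= rsum a n f) by (apply IH; intros; apply H; lia).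
  assert (0 <= f (a + n)%nat) by (apply H; lia). lra.
Qed.

Lemma rsum_nonpos a n f : (forall i, (a <= i < a + n)%nat -> f i <= 0) ->
  rsum a n f <= 0.
Proof.
  induction n as [|n IH]; intros H; simpl; [lra|].
  assert (rsum a n f <= 0) by (apply IH; intros; apply H; lia).
  assert (f (a + n)%nat <= 0) by (apply H; lia). lra.
Qed.

Definition conv (g u : nat -> R) (t : nat) : R :=
  rsum 0 (S t) (fun k => g k * u (t - k)%nat).

Lemma conv_first g u t :
  conv g u t = g O * u t + rsum 1 t (fun k => g k * u (t - k)%nat).
Proof. unfold conv. rewrite rsum_first, Nat.sub_0_r. reflexivity. Qed.

Lemma conv_sub g u u' t :
  conv g (fun s => u' s - u s) t = conv g u' t - conv g u t.
Proof.
  unfold conv.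
  replace (rsum 0 (S t) (fun k => g k * u' (t - k)%nat) - rsum 0 (S t) (fun k => g k * u (t - k)%nat))
    with (1 * rsum 0 (S t) (fun k => g k * u' (t - k)%nat)
          + (-1) * rsum 0 (S t) (fun k => g k * u (t - k)%nat)) by ring.
  rewrite <- rsum_linear. apply rsum_ext. intros. ring.
Qed.

Lemma wellbeing_S g ynat u t : wellbeing g ynat u (S t) = conv g u t + ynat (S t).
Proof. reflexivity. Qed.

Fixpoint discounted (alpha : R) (d : nat -> R) (t : nat) : R :=
  match t with
  | O => d O
  | S s => alpha * discounted alpha d s + d (S s)
  end.

Definition discounted_pred (alpha : R) (d : nat -> R) (t : nat) : R :=
  match t with
  | O => 0
  | S s => discounted alpha d s
  end.

Lemma discounted_eq alpha d t :
  discounted alpha d t = alpha * discounted_pred alpha d t + d t.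
Proof. destruct t; simpl; lra. Qed.

Lemma conv_discounted g alpha d t :
  conv g d t = g O * discounted alpha d t
    + rsum 1 t (fun k => (g k - alpha * g (k - 1)%nat) * discounted alpha d (t - k)%nat).
Proof.
  set (E := discounted alpha d).
  assert (Hsplit : conv g d t = conv g E t + (- alpha) * conv g (discounted_pred alpha d) t).
  { unfold conv. rewrite <- (Rmult_1_l (rsum 0 (S t) (fun k => g k * E (t - k)%nat))).
    rewrite <- rsum_linear. apply rsum_ext. intros i _.
    unfold E. rewrite (discounted_eq alpha d (t - i)). ring. }
  assert (Hpred : conv g (discounted_pred alpha d) t
                  = rsum 0 t (fun k => g k * E (t - 1 - k)%nat)).
  { unfold conv. simpl. rewrite Nat.sub_diag. simpl. rewrite Rmult_0_r, Rplus_0_r.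
    apply rsum_ext. intros i Hi. replace (t - i)%nat with (S (t - 1 - i)) by lia.
    reflexivity. }
  assert (Hstep : rsum 1 t (fun k => (g k - alpha * g (k - 1)%nat) * E (t - k)%nat)
                  = rsum 1 t (fun k => g k * E (t - k)%nat)
                    + (- alpha) * rsum 0 t (fun k => g k * E (t - 1 - k)%nat)).
  { rewrite <- (Rmult_1_l (rsum 1 t (fun k => g k * E (t - k)%nat))).
    replace (rsum 0 t (fun k => g k * E (t - 1 - k)%nat))
      with (rsum 1 t (fun k => g (k - 1)%nat * E (t - k)%nat)).
    - rewrite <- rsum_linear. apply rsum_ext. intros. ring.
    - rewrite rsum_shift. apply rsum_ext. intros i Hi.
      replace (S i - 1)%nat with i by lia. replace (t - S i)%nat with (t - 1 - i)%nat by lia.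
      reflexivity. }
  rewrite Hsplit, Hpred, Hstep, conv_first. ring.
Qed.

Lemma rsum_discounted alpha d n :
  rsum 0 (S n) d = discounted alpha d n + (1 - alpha) * rsum 0 n (discounted alpha d).
Proof.
  induction n as [|n IH]; [simpl; lra|].
  change (rsum 0 (S (S n)) d) with (rsum 0 (S n) d + d (S n)).
  rewrite IH. simpl. lra.
Qed.

Lemma rsum_le_of_discounted_nonneg alpha u u' n : alpha <= 1 ->
  (forall t, (t < n)%nat -> 0 <= discounted alpha (fun s => u' s - u s) t) ->
  rsum 0 n u <= rsum 0 n u'.
Proof.
  intros Halpha HE.
  set (d := fun s => u' s - u s).
  enough (Hd : 0 <= rsum 0 n d).
  { replace (rsum 0 n d) with (1 * rsum 0 n u' + (-1) * rsum 0 n u) in Hd; [lra|].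
    rewrite <- rsum_linear. apply rsum_ext. intros. unfold d. ring. }
  destruct n as [|n]; [simpl; lra|].
  rewrite (rsum_discounted alpha).
  assert (0 <= discounted alpha d n) by (apply HE; lia).
  assert (0 <= rsum 0 n (discounted alpha d)) by (apply rsum_nonneg; intros; apply HE; lia).
  assert (0 <= (1 - alpha) * rsum 0 n (discounted alpha d)) by (apply Rmult_le_pos; lra).
  lra.
Qed.

Lemma LPOP_step_le g tau0 alpha k : LPOP g tau0 alpha -> (1 <= k)%nat ->
  g k <= alpha * g (k - 1)%nat.
Proof.
  intros [[Hpos Hneg] [Halpha [Hdec Hinc]]] Hk.
  replace k with (k - 1 + 1)%nat at 1 by lia.
  destruct (Nat.lt_ge_cases k tau0) as [Hlt|Hge].
  - apply Hdec. lia.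
  - destruct (Nat.eq_dec k tau0) as [->|Hne].
    + assert (0 < g (tau0 - 1)%nat) by (apply Hpos; lia).
      assert (g tau0 <= 0) by (apply Hneg; lia).
      replace (tau0 - 1 + 1)%nat with tau0 by lia. nra.
    + assert (Hx := Hinc (k - 1)%nat ltac:(lia)).
      assert (g (k - 1 + 1)%nat <= 0) by (apply Hneg; lia).
      assert (g (k - 1)%nat <= 0) by (apply Hneg; lia).
      rewrite Rabs_left1 in Hx by lra. rewrite Rabs_left1 in Hx by lra. lra.
Qed.

Section Comparison.

Variables (g : nat -> R) (alpha : R) (u u' : nat -> R) (T : nat).
Hypothesis g0_pos : 0 < g O.
Hypothesis alpha_nonneg : 0 <= alpha.
Hypothesis g_step_le : forall k, (1 <= k)%nat -> g k <= alpha * g (k - 1)%nat.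
Hypothesis idle_or_dominated : forall t, (t < T)%nat ->
  (u t = 0 /\ 0 <= u' t) \/ conv g u t <= conv g u' t.

Lemma discounted_excess_nonneg t : (t < T)%nat ->
  0 <= discounted alpha (fun s => u' s - u s) t.
Proof.
  set (d := fun s => u' s - u s).
  induction t as [t IH] using lt_wf_ind. intros HtT.
  assert (Hpred : 0 <= discounted_pred alpha d t).
  { destruct t as [|s]; simpl; [lra|]. apply IH; lia. }
  destruct (idle_or_dominated t HtT) as [[Hu Hu'] | Hconv].
  - rewrite discounted_eq. unfold d at 2. rewrite Hu.
    assert (0 <= alpha * discounted_pred alpha d t) by (apply Rmult_le_pos; lra). lra.
  - assert (Htail : rsum 1 t (fun k => (g k - alpha * g (k - 1)%nat)
                                       * discounted alpha d (t - k)%nat) <= 0).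
    { apply rsum_nonpos. intros k Hk.
      assert (g k - alpha * g (k - 1)%nat <= 0) by (assert (H := g_step_le k ltac:(lia)); lra).
      assert (0 <= discounted alpha d (t - k)%nat) by (apply IH; lia).
      nra. }
    assert (Hd : 0 <= conv g d t) by (unfold d; rewrite conv_sub; lra).
    rewrite conv_discounted with (alpha := alpha) in Hd. nra.
Qed.

End Comparison.

Lemma Rmax_0_div_spec a c : 0 < a ->
  0 <= Rmax 0 (c / a) /\ c <= a * Rmax 0 (c / a) /\
  (Rmax 0 (c / a) = 0 \/ a * Rmax 0 (c / a) = c).
Proof.
  intros Ha. unfold Rmax. destruct (Rle_dec 0 (c / a)) as [H|H].
  - assert (a * (c / a) = c) by (field; lra). auto with real.
  - assert (c < 0).
    { apply Rnot_le_lt in H. apply Rmult_lt_reg_r with (/ a).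
      - apply Rinv_0_lt_compat, Ha.
      - rewrite Rmult_0_l. exact H. }
    split; [lra|]. split; [lra|]. left. reflexivity.
Qed.

Lemma med_prefix_eq g ynat ymin n i : (i < n)%nat ->
  med_prefix g ynat ymin n i = med_dose g ynat ymin i.
Proof.
  induction n as [|n IH]; intros Hi; [lia|].
  unfold med_dose. simpl.
  destruct (Nat.eqb_spec i n) as [->|Hne].
  - simpl. rewrite Nat.eqb_refl. reflexivity.
  - rewrite IH by lia. reflexivity.
Qed.

Lemma med_dose_eq g ynat ymin t :
  med_dose g ynat ymin t =
  Rmax 0 ((ymin - ynat (S t)
           - rsum 1 t (fun k => g k * med_dose g ynat ymin (t - k)%nat)) / g O).
Proof.
  unfold med_dose at 1. simpl. rewrite Nat.eqb_refl. do 3 f_equal.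
  apply rsum_ext. intros i Hi. rewrite med_prefix_eq by lia. reflexivity.
Qed.

Lemma med_dose_spec g ynat ymin t : 0 < g O ->
  0 <= med_dose g ynat ymin t /\
  wellbeing g ynat (med_dose g ynat ymin) (S t) >= ymin /\
  (med_dose g ynat ymin t = 0 \/ wellbeing g ynat (med_dose g ynat ymin) (S t) = ymin).
Proof.
  intros g0. rewrite wellbeing_S, conv_first.
  destruct (Rmax_0_div_spec (g O)
              (ymin - ynat (S t) - rsum 1 t (fun k => g k * med_dose g ynat ymin (t - k)%nat)) g0)
    as [H1 [H2 H3]].
  rewrite <- med_dose_eq in H1, H2, H3.
  split; [lra|]. split; [lra|]. destruct H3; [left | right]; lra.
Qed.

Theorem theorem1 (g : nat -> R) (tau0 : nat) (alpha : R) (T : nat) (ymin : R)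
  (ynat : nat -> R) :
  LPOP g tau0 alpha -> (1 <= tau0)%nat -> (1 <= T)%nat ->
  (forall t, (1 <= t <= T)%nat ->
     wellbeing g ynat (med_dose g ynat ymin) t >= ymin) /\
  (forall u' : nat -> R,
     (forall t, (t < T)%nat -> 0 <= u' t) ->
     (forall t, (1 <= t <= T)%nat -> wellbeing g ynat u' t >= ymin) ->
     rsum 0 T (med_dose g ynat ymin) <= rsum 0 T u').
Proof.
  intros HL Htau _.
  pose proof HL as [[g_pos _] [alpha_range _]].
  assert (g0 : 0 < g O) by (apply g_pos; lia).
  set (u := med_dose g ynat ymin).
  split.
  - intros [|t] Ht; [lia|]. apply med_dose_spec, g0.
  - intros u' Hu'0 Hu'.
    assert (Hactive : forall t, (t < T)%nat ->
              (u t = 0 /\ 0 <= u' t) \/ conv g u t <= conv g u' t).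
    { intros t Ht.
      destruct (med_dose_spec g ynat ymin t g0) as [_ [_ [Hidle|Htight]]].
      - left. split; [exact Hidle | apply Hu'0, Ht].
      - right. assert (H := Hu' (S t) ltac:(lia)).
        rewrite wellbeing_S in H, Htight. fold u in Htight. lra. }
    apply rsum_le_of_discounted_nonneg with alpha; [lra|].
    intros t Ht. apply (discounted_excess_nonneg g alpha u u' T g0); [lra | | exact Hactive | exact Ht].
    intros k Hk. exact (LPOP_step_le g tau0 alpha k HL Hk).
Qed.
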